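(* Let $n,k,l$ be nonnegative integers with $k+l\le n$, let $\alpha,\beta>-1$, set $\sigma=\alpha+\beta+1$, and for $i=k+l,\ldots,n$ and $h=k,\ldots,n-l$ define \[ c_{ih}=\frac{(\alpha+2l+1)_{i-k-l}}{(i-k-l)!}\binom{n}{h}^{-1}\binom{n-k-l}{h-k}\,Q_{i-k-l}(n-l-h;\,\alpha+2l,\,\beta+2k,\,n-k-l). \] Then for each fixed $h$ (and whenever the indices involved lie in the range $k+l\le i\le n$): \[ c_{k+l,h}=\binom{n}{h}^{-1}\binom{n-k-l}{h-k}, \] \[ c_{k+l+1,h}=c_{k+l,h}\left[\alpha+2l+1-\frac{(\sigma+2k+2l+1)(l+h-n)}{k+l-n}\right], \] and for $i=k+l+2,k+l+3,\ldots,n$, \[ c_{ih}=K_h(i)\,c_{i-1,h}+L(i)\,c_{i-2,h}, \] where \[ M(i)=\frac{(i-k-l-1)(n+i+\alpha+\beta)(i+k+\beta-l-1)(2i+\alpha+\beta)}{(2i+\alpha+\beta-2)(i+k+l+\alpha+\beta)(i+l+\alpha-k)(i-n-1)}, \] \[ K_h(i)=\frac{\alpha+l+i-k}{i-k-l}\left[1-M(i)-\frac{(l+h-n)(2i+\alpha+\beta-1)_2}{(i+k+l+\alpha+\beta)(\alpha+l+i-k)(i-n-1)}\right], \] \[ L(i)=\frac{(\alpha+l+i-k-1)_2}{(i-k-l-1)_2}\,M(i). \]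
   Context: Pochhammer symbol: $(a)_0=1$, $(a)_j=a(a+1)\cdots(a+j-1)$. Hahn polynomials: for a nonnegative integer $N$, $a,b>-1$ and $m=0,1,\ldots,N$, $Q_m(x;a,b,N)=\sum_{j=0}^m\frac{(-m)_j(m+a+b+1)_j(-x)_j}{j!\,(a+1)_j\,(-N)_j}$. (The numbers $c_{ih}$ are the coefficients of the modified Jacobi polynomial $J_{i,k,l}^{(\alpha,\beta)}(x)=(1-x)^lx^kR^{(\alpha+2l,\beta+2k)}_{i-k-l}(x)$ in the Bernstein basis $B^n_h(x)=\binom nh x^h(1-x)^{n-h}$, $h=k,\ldots,n-l$, where $R^{(a,b)}_m(x)=\frac{(a+1)_m}{m!}\sum_{j=0}^m\frac{(-m)_j(m+a+b+1)_j}{j!(a+1)_j}(1-x)^j$.) *)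

From HB Require Import structures.
From mathcomp Require Import all_boot all_order all_algebra.
Set Implicit Arguments. Unset Strict Implicit. Unset Printing Implicit Defensive.
Import Order.TTheory GRing.Theory Num.Theory.
Local Open Scope ring_scope.

Section Defs.
Variable R : realFieldType.

Definition poch (a : R) (j : nat) : R := \prod_(0 <= t < j) (a + t%:R).

Definition hahnQ (m : nat) (x a b : R) (N : nat) : R :=
  \sum_(j < m.+1)
    (poch (- m%:R) j * poch (m%:R + a + b + 1) j * poch (- x) j)
    / (j`!%:R * poch (a + 1) j * poch (- N%:R) j).

Definition cc (n k l : nat) (al be : R) (i h : nat) : R :=
  poch (al + 2 * l%:R + 1) (i - k - l) / (i - k - l)`!%:R
  * ('C(n, h)%:R)^-1 * 'C(n - k - l, h - k)%:R
  * hahnQ (i - k - l) (n - l - h)%:R (al + 2 * l%:R) (be + 2 * k%:R) (n - k - l).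

(* M(i), written with real (not truncated) arithmetic on the indices *)
Definition Mi (n k l : nat) (al be : R) (i : nat) : R :=
  let i' := i%:R in let n' := n%:R in let k' := k%:R in let l' := l%:R in
  ((i' - k' - l' - 1) * (n' + i' + al + be) * (i' + k' + be - l' - 1)
     * (2 * i' + al + be))
  / ((2 * i' + al + be - 2) * (i' + k' + l' + al + be) * (i' + l' + al - k')
     * (i' - n' - 1)).

Definition Ki (n k l : nat) (al be : R) (h i : nat) : R :=
  let i' := i%:R in let n' := n%:R in let k' := k%:R in let l' := l%:R in
  let h' := h%:R in
  (al + l' + i' - k') / (i' - k' - l')
  * (1 - Mi n k l al be i
     - (l' + h' - n') * poch (2 * i' + al + be - 1) 2
       / ((i' + k' + l' + al + be) * (al + l' + i' - k') * (i' - n' - 1))).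

Definition Li (n k l : nat) (al be : R) (i : nat) : R :=
  let i' := i%:R in let k' := k%:R in let l' := l%:R in
  poch (al + l' + i' - k' - 1) 2 / poch (i' - k' - l' - 1) 2 * Mi n k l al be i.

End Defs.

From HB Require Import structures.
From mathcomp Require Import all_boot all_order all_algebra.
From mathcomp Require Import zify ring lra.
Import Order.TTheory GRing.Theory Num.Theory.
Set Implicit Arguments. Unset Strict Implicit. Unset Printing Implicit Defensive.
Local Open Scope ring_scope.

(* With m = i - k - l, the coefficient c_{ih} is (a + 1)_m / m! times a
   constant binomial factor times the Hahn polynomial Q_m(x; a, b, N), where
   x = n - l - h, a = al + 2l, b = be + 2k and N = n - k - l.  The first two
   identities are the values of Q_0 and Q_1; the recurrence is the classical
   three-term recurrence of Hahn polynomials in the degree, rescaled by the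
   ratios of the prefactors (a + 1)_m / m!.  That recurrence is checked
   coefficientwise in the basis (-x)_j of polynomials in x. *)

Lemma natrBB (R : pzRingType) (n p q : nat) : (p + q <= n)%N ->
  (n - p - q)%:R = n%:R - p%:R - q%:R :> R.
Proof. by move=> pqn; rewrite !natrB //; lia. Qed.

Section Pochhammer.
Variable R : realFieldType.
Implicit Types (c : R) (p : nat).

Lemma poch0 c : poch c 0 = 1.
Proof. by rewrite /poch big_geq. Qed.

Lemma pochS c p : poch c p.+1 = poch c p * (c + p%:R).
Proof. by rewrite /poch big_nat_recr. Qed.

Lemma pochSl c p : poch c p.+1 = c * poch (c + 1) p.
Proof.
rewrite /poch big_nat_recl // addr0; congr (_ * _).
by apply: eq_bigr => t _; rewrite -natr1 addrA addrAC.
Qed.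

Lemma poch_addr1 c p : c != 0 -> poch (c + 1) p = poch c p.+1 / c.
Proof. by move=> c0; rewrite pochSl mulrAC divff // mul1r. Qed.

Lemma poch2 c : poch c 2 = c * (c + 1).
Proof. by rewrite !pochS poch0 mul1r addr0. Qed.

Lemma poch_neq0 c p : (forall t, (t < p)%N -> c + t%:R != 0) -> poch c p != 0.
Proof.
elim: p => [|p IH] H; first by rewrite poch0 oner_neq0.
by rewrite pochS mulf_neq0 ?H // IH // => t tp; apply: H; apply: ltnW.
Qed.

Lemma poch_gt0 c p : 0 < c -> 0 < poch c p.
Proof.
by move=> c0; elim: p => [|p IH]; rewrite ?poch0 // pochS mulr_gt0 // ltr_wpDr.
Qed.

Lemma poch_oppn_eq0 (m j : nat) : (m < j)%N -> poch (- m%:R : R) j = 0.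
Proof.
elim: j => [//|j IH]; rewrite ltnS leq_eqVlt => /orP[/eqP <-|mj].
  by rewrite pochS addNr mulr0.
by rewrite pochS IH // mul0r.
Qed.

Lemma poch_oppn_neq0 (N j : nat) : (j <= N)%N -> poch (- N%:R : R) j != 0.
Proof.
move=> jN; apply: poch_neq0 => t tj.
by rewrite addrC subr_eq0 eqr_nat neq_ltn (leq_trans tj jN).
Qed.

End Pochhammer.

Section Hahn.
Variables (R : realFieldType) (a b : R) (N : nat).

Definition hahn_coef (m j : nat) : R :=
  poch (- m%:R) j * poch (m%:R + a + b + 1) j
  / (j`!%:R * poch (a + 1) j * poch (- N%:R) j).

(* The coefficients of the three-term recurrence of the Hahn polynomials
   (Koekoek, Lesky and Swarttouw, Hypergeometric orthogonal polynomials, 9.5). *)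
Definition hahnA (m : nat) : R :=
  (m%:R + a + b + 1) * (m%:R + a + 1) * (N%:R - m%:R)
  / ((2 * m%:R + a + b + 1) * (2 * m%:R + a + b + 2)).

Definition hahnC (m : nat) : R :=
  m%:R * (m%:R + a + b + N%:R + 1) * (m%:R + b)
  / ((2 * m%:R + a + b) * (2 * m%:R + a + b + 1)).

Lemma hahnQ0 (x : R) : hahnQ 0 x a b N = 1.
Proof. by rewrite /hahnQ big_ord1 !poch0 !mulr1 mul1r invr1. Qed.

Lemma hahnQ1 (x : R) : hahnQ 1 x a b N = 1 - (a + b + 2) * x / ((a + 1) * N%:R).
Proof.
rewrite /hahnQ big_ord_recr big_ord1 /= !pochS !poch0 !mul1r !addr0.
by rewrite invr1 !invfM invrN; ring.
Qed.

Lemma hahn_coef0 m : hahn_coef m 0 = 1.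
Proof. by rewrite /hahn_coef !poch0 !mulr1 mul1r invr1. Qed.

Lemma hahn_coef_eq0 m j : (m < j)%N -> hahn_coef m j = 0.
Proof. by move=> mj; rewrite /hahn_coef poch_oppn_eq0 // !mul0r. Qed.

Lemma hahnQE (x : R) m M : (m < M)%N ->
  hahnQ m x a b N = \sum_(0 <= j < M) hahn_coef m j * poch (- x) j.
Proof.
move=> mM; rewrite (big_cat_nat _ (n := m.+1)) //= [X in _ + X]big_nat_cond.
rewrite [X in _ + X]big1 => [|j /andP[/andP[mj _] _]]; last first.
  by rewrite hahn_coef_eq0 ?mul0r.
by rewrite addr0 big_mkord; apply: eq_bigr => j _; rewrite /hahn_coef mulrAC.
Qed.

(* Comparing coefficients of [poch (- x) j] in the three-term recurrence,
   using [- x * poch (- x) j = poch (- x) j.+1 - j * poch (- x) j]. *)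
Lemma hahn_coef_rec m j : -1 < a -> -1 < b -> (m.+2 <= N)%N -> (j <= m.+2)%N ->
  (if j is p.+1 then hahn_coef m.+1 p else 0) - j%:R * hahn_coef m.+1 j =
  hahnA m.+1 * hahn_coef m.+2 j - (hahnA m.+1 + hahnC m.+1) * hahn_coef m.+1 j
  + hahnC m.+1 * hahn_coef m j.
Proof.
move=> ha hb mN; case: j => [_|p pm]; first by rewrite !hahn_coef0 mul0r subr0; ring.
have m0 := ler0n R m; have p0 := ler0n R p.
pose c : R := - (m.+1)%:R; pose d : R := (m.+1)%:R + a + b + 1.
have c0 : c != 0 by rewrite oppr_eq0 pnatr_eq0.
have d0 : d != 0 by apply: lt0r_neq0; rewrite /d -natr1; lra.
have eNm2 : poch (- (m.+2)%:R) p.+1 = - (m.+2)%:R * poch c p.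
  by rewrite pochSl /c -[(m.+2)%:R]natr1 opprD addrNK.
have eNm : poch (- m%:R) p.+1 = poch c p * (c + p%:R) * (c + p.+1%:R) / c.
  by rewrite -!pochS -poch_addr1 // /c -natr1 opprD addrNK.
have eDm2 : poch ((m.+2)%:R + a + b + 1) p.+1 =
    poch d p * (d + p%:R) * (d + p.+1%:R) / d.
  by rewrite -!pochS -poch_addr1 // /d -[(m.+2)%:R]natr1; congr poch; ring.
have eDm : poch (m%:R + a + b + 1) p.+1 = (m%:R + a + b + 1) * poch d p.
  by rewrite pochSl /d -natr1; congr (_ * poch _ _); ring.
have Fp0 : p`!%:R != 0 :> R by rewrite pnatr_eq0 -lt0n fact_gt0.
have Ap0 : poch (a + 1) p != 0 by rewrite lt0r_neq0 // poch_gt0 // -ltrBlDr sub0r.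
have Np0 : poch (- N%:R : R) p != 0 by apply: poch_oppn_neq0; lia.
have Npp0 : - N%:R + p%:R != 0 :> R by rewrite addrC subr_eq0 eqr_nat; apply/eqP; lia.
rewrite /hahn_coef eNm2 eNm eDm2 eDm !pochS factS natrM /hahnA /hahnC /c /d -!natr1.
by field; rewrite Npp0 Np0 Ap0 Fp0 /=; repeat (apply/andP; split); apply/eqP; lra.
Qed.

Lemma hahnQ_rec (x : R) m : -1 < a -> -1 < b -> (m.+2 <= N)%N ->
  - x * hahnQ m.+1 x a b N =
  hahnA m.+1 * hahnQ m.+2 x a b N - (hahnA m.+1 + hahnC m.+1) * hahnQ m.+1 x a b N
  + hahnC m.+1 * hahnQ m x a b N.
Proof.
move=> ha hb mN.
have shift : - x * hahnQ m.+1 x a b N = \sum_(0 <= j < m.+3)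
    ((if j is p.+1 then hahn_coef m.+1 p else 0) - j%:R * hahn_coef m.+1 j)
    * poch (- x) j.
  rewrite (hahnQE _ (ltnSn m.+1)) mulr_sumr.
  transitivity (\sum_(0 <= j < m.+2) (hahn_coef m.+1 j * poch (- x) j.+1
                   - j%:R * hahn_coef m.+1 j * poch (- x) j)).
    by apply: eq_bigr => j _; rewrite pochS; ring.
  under [RHS]eq_bigr do rewrite mulrBl.
  rewrite !sumrB; congr (_ - _).
    by rewrite [RHS]big_nat_recl //= mul0r add0r.
  by rewrite [RHS]big_nat_recr //= hahn_coef_eq0 // mulr0 mul0r addr0.
have lt1 := ltnSn m.+2; have lt2 := ltnW lt1; have lt3 := ltnW lt2.
rewrite shift (hahnQE x lt1) (hahnQE x lt2) (hahnQE x lt3).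
rewrite !mulr_sumr -sumrB -big_split /=.
by apply: eq_big_nat => j /andP[_ jm]; rewrite hahn_coef_rec //; ring.
Qed.

End Hahn.

Section Coefficients.
Variables (R : realFieldType) (n k l : nat) (al be : R) (h : nat).

Lemma ccE m : cc n k l al be (m + k + l) h =
  poch (al + 2 * l%:R + 1) m / m`!%:R
  * ('C(n, h)%:R)^-1 * 'C(n - k - l, h - k)%:R
  * hahnQ m (n - l - h)%:R (al + 2 * l%:R) (be + 2 * k%:R) (n - k - l).
Proof. by rewrite /cc -addnA -subnDA addnK. Qed.

Lemma cc_base : cc n k l al be (k + l) h = ('C(n, h)%:R)^-1 * 'C(n - k - l, h - k)%:R.
Proof. by rewrite -[(k + l)%N]add0n addnA ccE hahnQ0 poch0 !mulr1 mul1r invr1 mul1r. Qed.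

Lemma cc_next : -1 < al -> (k + l + 1 <= n)%N -> (h <= n - l)%N ->
  cc n k l al be (k + l + 1) h =
  cc n k l al be (k + l) h
  * (al + 2 * l%:R + 1
     - (al + be + 1 + 2 * k%:R + 2 * l%:R + 1) * (l%:R + h%:R - n%:R)
       / (k%:R + l%:R - n%:R)).
Proof.
move=> hal hn hh.
have l0 := ler0n R l.
have hn' : k%:R + l%:R + 1 <= n%:R :> R by rewrite -natrD natr1 ler_nat -addn1.
have Cnh : 'C(n, h)%:R != 0 :> R by rewrite pnatr_eq0 -lt0n bin_gt0; lia.
rewrite cc_base (addnC _ 1) addnA ccE hahnQ1 pochS poch0 mul1r addr0.
rewrite (_ : 1`!%:R = 1 :> R) // divr1 !natrBB; try lia.
by field; rewrite Cnh /=; repeat (apply/andP; split); apply/eqP; lra.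
Qed.

Lemma cc_rec m : -1 < al -> -1 < be -> (h <= n - l)%N -> (m.+2 + k + l <= n)%N ->
  cc n k l al be (m.+2 + k + l) h =
  Ki n k l al be h (m.+2 + k + l) * cc n k l al be (m.+1 + k + l) h
  + Li n k l al be (m.+2 + k + l) * cc n k l al be (m + k + l) h.
Proof.
move=> hal hbe hh hn.
have m0 := ler0n R m; have k0 := ler0n R k; have l0 := ler0n R l.
have ha : -1 < al + 2 * l%:R by lra.
have hb : -1 < be + 2 * k%:R by lra.
have hmN : (m.+2 <= n - k - l)%N by lia.
have rec := hahnQ_rec (n - l - h)%:R ha hb hmN.
rewrite !ccE.
set A := hahnA _ _ _ _ in rec; set C := hahnC _ _ _ _ in rec.
set Q2 := hahnQ m.+2 _ _ _ _ in rec *; set Q1 := hahnQ m.+1 _ _ _ _ in rec *.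
set Q0 := hahnQ m _ _ _ _ in rec *.
have hn' : m%:R + 2 + k%:R + l%:R <= n%:R :> R.
  by move: hn; rewrite -(ler_nat R) !natrD -!natr1; lra.
have A0 : A != 0.
  rewrite /A /hahnA natrBB; last lia.
  by rewrite -!natr1 mulf_neq0 ?invr_eq0 ?mulf_neq0 //; apply/eqP; lra.
have -> : Q2 = ((- (n - l - h)%:R + A + C) * Q1 - C * Q0) / A.
  move: rec A0; clearbody A C Q0 Q1 Q2 => rec A0.
  have AQ2 : A * Q2 = - (n - l - h)%:R * Q1 + (A + C) * Q1 - C * Q0.
    by rewrite rec; ring.
  by apply: (mulfI A0); rewrite mulrCA divff // mulr1 AQ2; ring.
have Cnh : 'C(n, h)%:R != 0 :> R by rewrite pnatr_eq0 -lt0n bin_gt0; lia.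
have Fm : m`!%:R != 0 :> R by rewrite pnatr_eq0 -lt0n fact_gt0.
rewrite /A /C /hahnA /hahnC /Ki /Li /Mi !poch2 !pochS !factS !natrM !natrBB; try lia.
rewrite !natrD -!natr1.
move: Cnh Fm; set B1 := 'C(n, h)%:R; set B2 := 'C(_, _)%:R.
set P := poch _ m; set F := m`!%:R; clearbody B1 B2 P F Q0 Q1 Q2 => Cnh Fm.
field.
by rewrite Cnh Fm /=; repeat (apply/andP; split); apply/eqP; lra.
Qed.

End Coefficients.

Theorem theorem2 (R : realFieldType) (n k l : nat) (al be : R)
  (hal : -1 < al) (hbe : -1 < be) (hkl : (k + l <= n)%N)
  (h : nat) (hh1 : (k <= h)%N) (hh2 : (h <= n - l)%N) :
  let sigma := al + be + 1 in
  [/\ cc n k l al be (k + l) h = ('C(n, h)%:R)^-1 * 'C(n - k - l, h - k)%:R,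
      (k + l + 1 <= n)%N ->
        cc n k l al be (k + l + 1) h =
        cc n k l al be (k + l) h
        * (al + 2 * l%:R + 1
           - (sigma + 2 * k%:R + 2 * l%:R + 1) * (l%:R + h%:R - n%:R)
             / (k%:R + l%:R - n%:R))
    & forall i : nat, (k + l + 2 <= i)%N -> (i <= n)%N ->
        cc n k l al be i h =
        Ki n k l al be h i * cc n k l al be i.-1 h
        + Li n k l al be i * cc n k l al be i.-2 h].
Proof.
move=> sigma; split; first exact: cc_base.
  by move=> hn; apply: cc_next.
move=> i hi hin; have [m ei] : exists m, i = (m.+2 + k + l)%N.
  by exists (i - k - l - 2)%N; lia.
by subst i; rewrite cc_rec // !addSn.
Qed.
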